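(* For every set $Q\subseteq\{0,1\}^n$ of at most $q=2^{0.01\sqrt n}$ points, $\Pr_{\mathbf A}[\mathsf{Bad}_J]=o_n(1)$.
   Context: Let $n$ be even and $a=n/2$. $\mathbf A\subseteq[n]$ is a uniformly random set of size $a$ and $\mathbf C=[n]\setminus\mathbf A$; $x_B$ denotes the restriction of $x$ to $B$ and $|z|$ the Hamming weight. The event $\mathsf{Bad}_J$ holds iff there exist $x,y\in Q$ with $x_{\mathbf C}=y_{\mathbf C}$, $|x_{\mathbf A}|>a/2+0.05\sqrt a$ and $|y_{\mathbf A}|<a/2-0.05\sqrt a$. *)

From mathcomp Require Import all_boot.
From Stdlib Require Import Reals.
Set Implicit Arguments. Unset Strict Implicit. Unset Printing Implicit Defensive.

Notation cube n := {ffun 'I_n -> bool}.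

Definition wt n (x : cube n) (B : {set 'I_n}) : nat := #|[set i in B | x i]|.

Definition Rltb (u v : R) : bool := if Rlt_dec u v then true else false.

(* Bad_J for the split (A, C = [n] \ A), with a = n/2 *)
Definition BadJ n (Q : {set cube n}) (A : {set 'I_n}) : bool :=
  let a := INR (n./2) in
  [exists x in Q, exists y in Q,
     [&& [forall i in ~: A, x i == y i],
         Rltb (a / 2 + (5 / 100) * sqrt a) (INR (wt x A)) &
         Rltb (INR (wt y A)) (a / 2 - (5 / 100) * sqrt a)]].

Definition PrBad n (Q : {set cube n}) : R :=
  (INR #|[set A : {set 'I_n} | (#|A| == n./2) && BadJ Q A]| / INR 'C(n, n./2))%R.

From Stdlib Require Import Reals Lra Lia.
From mathcomp Require Import all_boot zify.

Set Implicit Arguments. Unset Strict Implicit. Unset Printing Implicit Defensive.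

(* Proof by a union bound over pairs of points of Q.
   If Bad_J holds for A, the witnesses x, y agree outside A, so the set
   D(x,y) of coordinates where they differ lies inside A, and since only the
   coordinates of D(x,y) can change the weight, |D(x,y)| >= |x_A| - |y_A| >
   0.1 sqrt a.  For a fixed set D, at most a 2^-|D| fraction of the a-subsets
   of [n] contain D (as a <= n/2).  Summing over the |Q|^2 pairs gives
       Pr_A[Bad_J] * 2^(0.1 sqrt a) <= |Q|^2 <= 2^(0.02 sqrt n),
   and since 0.1 sqrt a >= 0.07 sqrt n the probability is at most
   2^(-0.05 sqrt n) <= 40 / sqrt n. *)

Lemma card_bigcup_le (I T : finType) (P : pred I) (F : I -> {set T}) :
  #|\bigcup_(i | P i) F i| <= \sum_(i | P i) #|F i|.
Proof.
elim/big_rec2: _ => [|i U k _ IH]; first by rewrite cards0.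
by apply: leq_trans (leq_card_setU _ _).1 _; rewrite leq_add2l.
Qed.

(* Removing d elements from both parameters of a binomial 'C(m, j) with
   j <= m/2 divides it by at least 2^d: each step uses j * 'C(m,j) =
   m * 'C(m-1,j-1) together with m >= 2j. *)
Lemma bin_sub_exp2_le m j d :
  2 * j <= m -> d <= j -> 'C(m - d, j - d) * 2 ^ d <= 'C(m, j).
Proof.
move=> le2jm; elim: d => [|d IH] ltdj; first by rewrite !subn0 muln1.
apply: leq_trans (IH (ltnW ltdj)).
set M := m - d; set J := j - d.
have J_gt0 : 0 < J by rewrite /J subn_gt0.
have le2JM : 2 * J <= M by rewrite /J /M; lia.
rewrite !subnS -/M -/J expnSr mulnA mulnAC leq_pmul2r ?expn_gt0 //.
have := mul_bin_diag M J.-1; rewrite prednK // => binE.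
rewrite -(leq_pmul2l J_gt0) -binE.
apply: leq_trans (leq_mul le2JM (leqnn 'C(M.-1, J.-1))).
by rewrite mulnC -mulnA mulnC.
Qed.

(* Among the k-subsets of a finite type with 2k <= #|T|, those containing a
   fixed set D form at most a 2^-|D| fraction: removing D maps them injectively
   to the (k - |D|)-subsets of the complement of D. *)
Lemma card_supersets_exp2 (T : finType) (D : {set T}) k :
  2 * k <= #|T| ->
  #|[set A : {set T} | (#|A| == k) && (D \subset A)]| * 2 ^ #|D| <= 'C(#|T|, k).
Proof.
move=> le2kT; set S := [set A : {set T} | _].
have [leDk | ltkD] := leqP #|D| k; last first.
  suff -> : S = set0 by rewrite cards0.
  apply/setP=> A; rewrite !inE; apply/negbTE/negP => /andP[/eqP cardA subDA].
  by have := subset_leq_card subDA; rewrite cardA leqNgt ltkD.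
have inj_diff : {in S &, injective (fun A => A :\: D)}.
  move=> A B; rewrite !inE => /andP[_ subDA] /andP[_ subDB] eqAB.
  apply/setP=> x; have := congr1 (fun X : {set T} => x \in X) eqAB; rewrite !inE.
  case xD: (x \in D) => //= _.
  by rewrite (subsetP subDA x xD) (subsetP subDB x xD).
have img_sub : [set A :\: D | A in S]
    \subset [set B : {set T} | B \subset ~: D & #|B| == k - #|D|].
  apply/subsetP=> B /imsetP[A]; rewrite !inE => /andP[/eqP cardA subDA] ->.
  rewrite cardsDS // cardA eqxx andbT.
  by apply/subsetP=> x; rewrite !inE => /andP[].
have := subset_leq_card img_sub; rewrite card_in_imset // cards_draws => cardS.
apply: leq_trans (leq_mul cardS (leqnn _)) _.
have -> : #|~: D| = #|T| - #|D| by rewrite -(cardsC D) addKn.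
exact: bin_sub_exp2_le.
Qed.

Definition diffset n (x y : cube n) : {set 'I_n} := [set i | x i != y i].

Lemma wt_le_diffset n (x y : cube n) (A : {set 'I_n}) :
  wt x A <= wt y A + #|diffset x y|.
Proof.
rewrite /wt; apply: leq_trans (leq_card_setU _ _).1.
apply: subset_leq_card; apply/subsetP=> i; rewrite !inE => /andP[-> xi] /=.
by case: (y i) xi => //= ->.
Qed.

Lemma union_bound_pairs n (Q : {set cube n}) k (P : {set 'I_n} -> bool) :
  (forall A : {set 'I_n}, #|A| = n./2 -> P A ->
     exists x y, [/\ x \in Q, y \in Q, diffset x y \subset A
                   & k <= #|diffset x y|]) ->
  #|[set A : {set 'I_n} | (#|A| == n./2) && P A]| * 2 ^ k
    <= #|Q| * #|Q| * 'C(n, n./2).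
Proof.
move=> witness.
pose S (p : cube n * cube n) := if k <= #|diffset p.1 p.2| then
  [set A : {set 'I_n} | (#|A| == n./2) && (diffset p.1 p.2 \subset A)] else set0.
have cover_sub : [set A : {set 'I_n} | (#|A| == n./2) && P A]
    \subset \bigcup_(p in setX Q Q) S p.
  apply/subsetP=> A; rewrite inE => /andP[/eqP cardA PA].
  have [x [y [xQ yQ subA leK]]] := witness A cardA PA.
  apply/bigcupP; exists (x, y); first by rewrite inE xQ yQ.
  by rewrite /S /= leK inE cardA eqxx subA.
apply: leq_trans (leq_mul (subset_leq_card cover_sub) (leqnn _)) _.
apply: leq_trans (leq_mul (card_bigcup_le _ _) (leqnn (2 ^ k))) _.
rewrite big_distrl /= -cardsX -sum_nat_const; apply: leq_sum => p _.
rewrite /S; case: ifP => leK; last by rewrite cards0.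
have half_le : 2 * n./2 <= #|'I_n|.
  by rewrite card_ord mul2n -{2}(odd_double_half n) leq_addl.
have := card_supersets_exp2 (diffset p.1 p.2) half_le; rewrite card_ord.
move=> supersets; apply: leq_trans supersets.
by rewrite leq_mul2l leq_exp2l // leK orbT.
Qed.

Lemma central_bin_gt0 n : 0 < 'C(n, n./2).
Proof. by rewrite bin_gt0 leq_half_double -addnn leqW // leq_addr. Qed.

Open Scope R_scope.

Lemma nat_ceil_spec (c : R) : 0 <= c ->
  exists k : nat, c <= INR k /\ forall d : nat, c < INR d -> (k <= d)%N.
Proof.
move=> c_ge0; have [up_gt up_le] := archimed c.
have up_ge0 : (0 <= up c)%Z by apply: le_IZR; lra.
exists (Z.to_nat (up c)); split.
  by rewrite INR_IZR_INZ Znat.Z2Nat.id //; lra.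
move=> d c_lt_d; apply/leP/Znat.Nat2Z.inj_le; rewrite Znat.Z2Nat.id //.
rewrite INR_IZR_INZ in c_lt_d.
apply/BinInt.Z.nlt_ge => lt_d_up.
have : (Z.of_nat d <= up c - 1)%Z by lia.
by move/IZR_le; rewrite minus_IZR; lra.
Qed.

Lemma INR_expn (m k : nat) : INR (m ^ k)%N = INR m ^ k.
Proof. by elim: k => [|k IH] //=; rewrite expnS mult_INR IH. Qed.

Lemma RltbP (u v : R) : Rltb u v -> u < v.
Proof. by rewrite /Rltb; case: Rlt_dec. Qed.

Lemma badJ_witness n (Q : {set cube n}) (A : {set 'I_n}) :
  BadJ Q A -> exists x y, [/\ x \in Q, y \in Q, diffset x y \subset A
    & (1/10) * sqrt (INR n./2) < INR #|diffset x y|].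
Proof.
case/existsP=> x /andP[xQ /existsP[y /andP[yQ /and3P[agree x_heavy y_light]]]].
exists x, y; split => //.
  apply/subsetP=> i; rewrite inE => neq; apply/negPn/negP => iNA.
  by move: neq; rewrite (eqP (implyP (forallP agree i) _)) ?eqxx // inE.
move/RltbP: x_heavy; move/RltbP: y_light.
move/leP/le_INR: (wt_le_diffset x y A); rewrite plus_INR; lra.
Qed.

Lemma PrBad_ge0 n (Q : {set cube n}) : 0 <= PrBad Q.
Proof.
by apply: Rle_mult_inv_pos; [apply: pos_INR | apply/lt_0_INR/ltP/central_bin_gt0].
Qed.

Lemma PrBad_exp_bound n (Q : {set cube n}) :
  PrBad Q * Rpower 2 ((1/10) * sqrt (INR n./2)) <= INR #|Q| ^ 2.
Proof.
have c_ge0 : 0 <= (1/10) * sqrt (INR n./2) by have := sqrt_pos (INR n./2); lra.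
have [k [c_le_k k_min]] := nat_ceil_spec c_ge0.
have count : (#|[set A : {set 'I_n} | (#|A| == n./2) && BadJ Q A]| * 2 ^ k
               <= #|Q| * #|Q| * 'C(n, n./2))%N.
  apply: union_bound_pairs => A _ /badJ_witness[x [y [xQ yQ subA gt_c]]].
  by exists x, y; split => //; apply: k_min.
have INR2 : INR 2 = 2 by rewrite /=; lra.
move/leP/le_INR: count; rewrite !mult_INR INR_expn INR2.
rewrite /PrBad; set B := INR _; set C := INR 'C(_, _) => count.
have C_gt0 : 0 < C by apply/lt_0_INR/ltP/central_bin_gt0.
have pow_le : Rpower 2 ((1/10) * sqrt (INR n./2)) <= 2 ^ k.
  by rewrite -Rpower_pow; [apply: Rle_Rpower; lra | lra].
apply: Rle_trans (Rmult_le_compat_l _ _ _ (PrBad_ge0 Q) pow_le) _.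
apply: (Rmult_le_reg_r C) => //.
rewrite (_ : B / C * 2 ^ k * C = B * 2 ^ k); last by field; lra.
by rewrite /= Rmult_1_r.
Qed.

Lemma sqrt_half_even n : ~~ odd n -> 7/10 * sqrt (INR n) <= sqrt (INR n./2).
Proof.
move=> n_even.
have nE : INR n = 2 * INR n./2.
  have := odd_double_half n; rewrite (negbTE n_even) add0n -mul2n => nE.
  by rewrite -{1}nE mult_INR.
have a_ge0 := pos_INR n./2.
have := sqrt_sqrt _ a_ge0; have := sqrt_sqrt (INR n) (pos_INR n).
have := sqrt_pos (INR n./2); have := sqrt_pos (INR n).
nra.
Qed.

Lemma linear_le_Rpower2 s : 0 <= s -> s / 40 <= Rpower 2 (s / 20).
Proof.
move=> s_ge0; rewrite /Rpower.
have := exp_ineq1_le (s / 20 * ln 2); have := ln_lt_2; nra.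
Qed.

Lemma PrBad_sqrt_bound n (Q : {set cube n}) :
  ~~ odd n -> INR #|Q| <= Rpower 2 ((1 / 100) * sqrt (INR n)) ->
  PrBad Q * sqrt (INR n) <= 40.
Proof.
move=> n_even cardQ; set s := sqrt (INR n) in cardQ *.
have Q2_le : INR #|Q| ^ 2 <= Rpower 2 (s / 50).
  have -> : s / 50 = 1 / 100 * s + 1 / 100 * s by lra.
  rewrite Rpower_plus /= Rmult_1_r.
  by apply: Rmult_le_compat => //; apply: pos_INR.
have exp_ge : Rpower 2 (s / 50) * Rpower 2 (s / 20)
                <= Rpower 2 ((1/10) * sqrt (INR n./2)).
  rewrite -Rpower_plus; apply: Rle_Rpower; first lra.
  by have := sqrt_half_even n_even; rewrite -/s; lra.
have decay : PrBad Q * Rpower 2 (s / 20) <= 1.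
  apply: (Rmult_le_reg_l (Rpower 2 (s / 50))); first exact: exp_pos.
  have := Rmult_le_compat_l _ _ _ (PrBad_ge0 Q) exp_ge.
  by have := PrBad_exp_bound Q; lra.
have := linear_le_Rpower2 (sqrt_pos (INR n)); rewrite -/s.
by have := PrBad_ge0 Q; nra.
Qed.

Theorem mainTheorem14 :
  forall eps : R, (0 < eps)%R ->
  exists N : nat, forall n : nat, (N <= n)%N -> ~~ odd n ->
  forall Q : {set cube n},
    (INR #|Q| <= Rpower 2 ((1 / 100) * sqrt (INR n)))%R ->
    (PrBad Q <= eps)%R.
Proof.
move=> eps eps_gt0; have [N N_large] := INR_unbounded ((40 / eps) ^ 2).
exists N => n le_Nn n_even Q cardQ.
have bound_gt0 : 0 < 40 / eps by apply: Rdiv_lt_0_compat; lra.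
have sqrt_large : 40 / eps <= sqrt (INR n).
  move/leP/le_INR: le_Nn => le_Nn.
  by rewrite -(sqrt_pow2 (40 / eps)); [apply: sqrt_le_1_alt | ]; lra.
have eps_sqrt_ge : 40 <= eps * sqrt (INR n).
  have := Rmult_le_compat_l _ _ _ (Rlt_le _ _ eps_gt0) sqrt_large.
  by rewrite /Rdiv Rmult_comm Rmult_assoc Rinv_l; lra.
have := PrBad_sqrt_bound n_even cardQ.
by move=> Pr_le; apply: (Rmult_le_reg_r (sqrt (INR n))); lra.
Qed.
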